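(* If a Banach space $Y$ contains a strictly convex $2$-dimensional subspace, then there exists a uniformly convex Banach space $X$ such that the pair $(X,Y)$ fails the uniform sBPBp.
   Context: Scalars $\mathbb{K}=\mathbb{R}$ or $\mathbb{C}$; $S_X$ is the unit sphere of $X$, $\mathcal{L}(X,Y)$ the bounded linear operators. A pair of Banach spaces $(X,Y)$ has the uniform strong Bishop–Phelps–Bollobás property (uniform sBPBp) if for every $\varepsilon>0$ there exists $\eta(\varepsilon)>0$ such that whenever $T\in\mathcal{L}(X,Y)$ with $\|T\|=1$ and $x_0\in S_X$ satisfy $\|T(x_0)\|>1-\eta(\varepsilon)$, there exists $x_1\in S_X$ with $\|T(x_1)\|=1$ and $\|x_1-x_0\|<\varepsilon$. *)

From Stdlib Require Import Reals.
Open Scope R_scope.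

Inductive scalar_kind : Type := RealScalars | ComplexScalars.

Definition scal (k : scalar_kind) : Type :=
  match k with RealScalars => R | ComplexScalars => (R * R)%type end.

Definition s_zero (k : scalar_kind) : scal k :=
  match k return scal k with RealScalars => 0 | ComplexScalars => (0, 0) end.
Definition s_one (k : scalar_kind) : scal k :=
  match k return scal k with RealScalars => 1 | ComplexScalars => (1, 0) end.
Definition s_add (k : scalar_kind) : scal k -> scal k -> scal k :=
  match k return scal k -> scal k -> scal k with
  | RealScalars => Rplus
  | ComplexScalars => fun a b => (fst a + fst b, snd a + snd b)
  end.
Definition s_mul (k : scalar_kind) : scal k -> scal k -> scal k :=
  match k return scal k -> scal k -> scal k with
  | RealScalars => Rmult
  | ComplexScalars => fun a b =>
      (fst a * fst b - snd a * snd b, fst a * snd b + snd a * fst b)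
  end.
Definition s_abs (k : scalar_kind) : scal k -> R :=
  match k return scal k -> R with
  | RealScalars => Rabs
  | ComplexScalars => fun a => sqrt (fst a * fst a + snd a * snd a)
  end.
Definition s_of_R (k : scalar_kind) : R -> scal k :=
  match k return R -> scal k with
  | RealScalars => fun r => r
  | ComplexScalars => fun r => (r, 0)
  end.

Record NormedSpace (k : scalar_kind) : Type := {
  V :> Type;
  vzero : V;
  vadd : V -> V -> V;
  vopp : V -> V;
  vscale : scal k -> V -> V;
  vnorm : V -> R;
  vadd_assoc : forall x y z, vadd x (vadd y z) = vadd (vadd x y) z;
  vadd_comm : forall x y, vadd x y = vadd y x;
  vadd_zero : forall x, vadd x vzero = x;
  vadd_opp : forall x, vadd x (vopp x) = vzero;
  vscale_one : forall x, vscale (s_one k) x = x;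
  vscale_assoc : forall a b x, vscale a (vscale b x) = vscale (s_mul k a b) x;
  vscale_addv : forall a x y, vscale a (vadd x y) = vadd (vscale a x) (vscale a y);
  vscale_adds : forall a b x, vscale (s_add k a b) x = vadd (vscale a x) (vscale b x);
  vnorm_zero_iff : forall x, vnorm x = 0 <-> x = vzero;
  vnorm_scale : forall a x, vnorm (vscale a x) = s_abs k a * vnorm x;
  vnorm_triangle : forall x y, vnorm (vadd x y) <= vnorm x + vnorm y
}.

Arguments vzero {k} _.
Arguments vadd {k _}.
Arguments vopp {k _}.
Arguments vscale {k _}.
Arguments vnorm {k _}.

Definition vsub {k} {X : NormedSpace k} (x y : X) : X := vadd x (vopp y).

Definition complete {k} (X : NormedSpace k) : Prop :=
  forall u : nat -> X,
    (forall eps, eps > 0 -> exists N, forall m n, (m >= N)%nat -> (n >= N)%nat ->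
        vnorm (vsub (u m) (u n)) < eps) ->
    exists l : X, forall eps, eps > 0 -> exists N, forall n, (n >= N)%nat ->
        vnorm (vsub (u n) l) < eps.

Record BanachSpace (k : scalar_kind) : Type := {
  bs_space :> NormedSpace k;
  bs_complete : complete bs_space
}.

Definition in_sphere {k} {X : NormedSpace k} (x : X) : Prop := vnorm x = 1.

Definition is_linear {k} {X Y : NormedSpace k} (T : X -> Y) : Prop :=
  (forall x y, T (vadd x y) = vadd (T x) (T y)) /\
  (forall a x, T (vscale a x) = vscale a (T x)).

Definition is_bounded {k} {X Y : NormedSpace k} (T : X -> Y) : Prop :=
  exists M, forall x, vnorm (T x) <= M * vnorm x.

Definition bounded_linear {k} {X Y : NormedSpace k} (T : X -> Y) : Prop :=
  is_linear T /\ is_bounded T.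

(** ||T|| = 1, i.e. sup_{x in S_X} ||T x|| = 1 (unfolded). *)
Definition op_norm_one {k} {X Y : NormedSpace k} (T : X -> Y) : Prop :=
  (forall x : X, in_sphere x -> vnorm (T x) <= 1) /\
  (forall d, d > 0 -> exists x : X, in_sphere x /\ vnorm (T x) > 1 - d).

Definition uniform_sBPBp {k} (X Y : NormedSpace k) : Prop :=
  exists eta : R -> R,
  forall eps, eps > 0 ->
    eta eps > 0 /\
    forall (T : X -> Y) (x0 : X),
      bounded_linear T -> op_norm_one T -> in_sphere x0 ->
      vnorm (T x0) > 1 - eta eps ->
      exists x1 : X, in_sphere x1 /\ vnorm (T x1) = 1 /\ vnorm (vsub x1 x0) < eps.

Definition uniformly_convex {k} (X : NormedSpace k) : Prop :=
  forall eps, eps > 0 -> exists delta, delta > 0 /\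
    forall x y : X, vnorm x <= 1 -> vnorm y <= 1 -> vnorm (vsub x y) >= eps ->
      vnorm (vscale (s_of_R k (1/2)) (vadd x y)) <= 1 - delta.

Definition in_span2 {k} {X : NormedSpace k} (u v x : X) : Prop :=
  exists a b : scal k, x = vadd (vscale a u) (vscale b v).

Definition has_strictly_convex_2dim_subspace {k} (Y : NormedSpace k) : Prop :=
  exists u v : Y,
    (forall a b : scal k, vadd (vscale a u) (vscale b v) = vzero Y ->
        a = s_zero k /\ b = s_zero k) /\
    (forall x y : Y, in_span2 u v x -> in_span2 u v y ->
        in_sphere x -> in_sphere y -> x <> y ->
        vnorm (vscale (s_of_R k (1/2)) (vadd x y)) < 1).

From Stdlib Require Import Reals Lra Psatz Lia Classical ClassicalEpsilon.
Require Coquelicot.Complex.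
Open Scope R_scope.

(* Pick unit vectors e1, e2 spanning the strictly convex plane with e1 Birkhoff orthogonal
   to e2 (e1 is the normalised point of least norm on the line u + K v).  Let X be K^2 with
   ||(a, b)|| = ||a e1 + b e2||: it is finite-dimensional, hence complete, and compactness
   upgrades its strict convexity to uniform convexity.  The operators
   T_lam (a, b) = a e1 + (1 - lam) b e2 have norm one and ||T_lam (0, 1)|| = 1 - lam, but
   T_lam (a, b) = 2 lam mid(a e1, a e1 + b e2) + (1 - 2 lam) (a e1 + b e2), so by strict
   convexity T_lam attains its norm only at (a, 0) with |a| = 1, and orthogonality puts these
   points at distance at least 1 from (0, 1).  Letting lam -> 0 defeats any eta(1). *)

Definition s_opp (k : scalar_kind) : scal k -> scal k :=
  match k return scal k -> scal k with
  | RealScalars => Ropp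
  | ComplexScalars => fun a => (- fst a, - snd a)
  end.

(* Junk at [0], like [Rinv]. *)
Definition s_inv (k : scalar_kind) : scal k -> scal k :=
  match k return scal k -> scal k with
  | RealScalars => Rinv
  | ComplexScalars => Complex.Cinv
  end.

Definition s_sub (k : scalar_kind) (a b : scal k) : scal k := s_add k a (s_opp k b).

Ltac destruct_scalars k :=
  destruct k; simpl in *;
  repeat match goal with a : (R * R)%type |- _ => destruct a end; simpl in *.

Ltac scal_ring k := destruct_scalars k; [field | f_equal; field].

Section Scalars.
Variable k : scalar_kind.

Lemma s_addC (a b : scal k) : s_add k a b = s_add k b a.
Proof. scal_ring k. Qed.
Lemma s_addA (a b c : scal k) : s_add k a (s_add k b c) = s_add k (s_add k a b) c.
Proof. scal_ring k. Qed.
Lemma s_addr0 (a : scal k) : s_add k a (s_zero k) = a.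
Proof. scal_ring k. Qed.
Lemma s_subrr (a : scal k) : s_sub k a a = s_zero k.
Proof. unfold s_sub; scal_ring k. Qed.
Lemma s_subr0 (a : scal k) : s_sub k a (s_zero k) = a.
Proof. unfold s_sub; scal_ring k. Qed.
Lemma s_mulC (a b : scal k) : s_mul k a b = s_mul k b a.
Proof. scal_ring k. Qed.
Lemma s_mulA (a b c : scal k) : s_mul k a (s_mul k b c) = s_mul k (s_mul k a b) c.
Proof. scal_ring k. Qed.
Lemma s_mul1r (a : scal k) : s_mul k (s_one k) a = a.
Proof. scal_ring k. Qed.
Lemma s_mulr1 (a : scal k) : s_mul k a (s_one k) = a.
Proof. scal_ring k. Qed.
Lemma s_mulr0 (a : scal k) : s_mul k a (s_zero k) = s_zero k.
Proof. scal_ring k. Qed.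
Lemma s_mulDr (a b c : scal k) : s_mul k a (s_add k b c) = s_add k (s_mul k a b) (s_mul k a c).
Proof. scal_ring k. Qed.
Lemma s_mulDl (a b c : scal k) : s_mul k (s_add k a b) c = s_add k (s_mul k a c) (s_mul k b c).
Proof. scal_ring k. Qed.
Lemma s_of_R_add (r r' : R) : s_add k (s_of_R k r) (s_of_R k r') = s_of_R k (r + r').
Proof. scal_ring k. Qed.
Lemma s_of_R1 : s_of_R k 1 = s_one k.
Proof. destruct k; reflexivity. Qed.
Lemma s_of_R0 : s_of_R k 0 = s_zero k.
Proof. destruct k; reflexivity. Qed.
Lemma s_oppE (a : scal k) : s_opp k a = s_mul k (s_of_R k (-1)) a.
Proof. scal_ring k. Qed.

Lemma s_abs_ge0 (a : scal k) : 0 <= s_abs k a.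
Proof. destruct_scalars k; [apply Rabs_pos | apply sqrt_pos]. Qed.

Lemma s_abs_Cmod (x y : R) : s_abs ComplexScalars (x, y) = Complex.Cmod (x, y).
Proof. unfold Complex.Cmod; simpl; f_equal; ring. Qed.

Lemma s_abs_mul (a b : scal k) : s_abs k (s_mul k a b) = s_abs k a * s_abs k b.
Proof.
  destruct k; [apply Rabs_mult|].
  destruct a as [x y], b as [z w]. simpl s_mul. rewrite !s_abs_Cmod.
  exact (Complex.Cmod_mult (x, y) (z, w)).
Qed.

Lemma s_abs_eq0 (a : scal k) : s_abs k a = 0 -> a = s_zero k.
Proof.
  destruct k.
  - simpl. intro H. destruct (Req_dec a 0) as [|Ha]; [assumption|].
    exfalso; exact (Rabs_no_R0 a Ha H).
  - destruct a as [x y]. rewrite s_abs_Cmod. apply Complex.Cmod_eq_0.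
Qed.

Lemma s_abs_of_R (r : R) : s_abs k (s_of_R k r) = Rabs r.
Proof. destruct k; [reflexivity|]. simpl s_of_R. rewrite s_abs_Cmod. apply Complex.Cmod_R. Qed.

Lemma s_abs0 : s_abs k (s_zero k) = 0.
Proof. rewrite <- s_of_R0, s_abs_of_R. apply Rabs_R0. Qed.
Lemma s_abs1 : s_abs k (s_one k) = 1.
Proof. rewrite <- s_of_R1, s_abs_of_R. apply Rabs_R1. Qed.

Lemma s_mulV (a : scal k) : a <> s_zero k -> s_mul k a (s_inv k a) = s_one k.
Proof.
  destruct k; simpl; intro Ha; [field; exact Ha|].
  destruct a as [x y]. exact (Complex.Cinv_r (x, y) Ha).
Qed.

Lemma s_one_neq0 : s_one k <> s_zero k.
Proof. intro H. pose proof s_abs1 as H1. rewrite H, s_abs0 in H1. lra. Qed.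
End Scalars.

Section NormedSpaceFacts.
Variable k : scalar_kind.
Variable X : NormedSpace k.
Implicit Types x y z : X.

Lemma vadd0l x : vadd (vzero X) x = x.
Proof. rewrite vadd_comm. apply vadd_zero. Qed.

Lemma vzero_of_double x : x = vadd x x -> x = vzero X.
Proof.
  intro H. rewrite <- (vadd_opp _ _ x). rewrite H at 2.
  rewrite <- vadd_assoc, vadd_opp, vadd_zero. reflexivity.
Qed.

Lemma vscale0 x : vscale (s_zero k) x = vzero X.
Proof. apply vzero_of_double. rewrite <- vscale_adds, s_addr0. reflexivity. Qed.

Lemma vscaler0 (a : scal k) : vscale a (vzero X) = vzero X.
Proof. apply vzero_of_double. rewrite <- vscale_addv, vadd_zero. reflexivity. Qed.

Lemma vopp_unique x y : vadd x y = vzero X -> y = vopp x.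
Proof.
  intro H. rewrite <- (vadd_zero _ _ y), <- (vadd_opp _ _ x), vadd_assoc.
  rewrite (vadd_comm _ _ y x), H, vadd0l. reflexivity.
Qed.

Lemma voppE x : vopp x = vscale (s_of_R k (-1)) x.
Proof.
  symmetry. apply vopp_unique. rewrite <- (vscale_one _ _ x) at 1.
  rewrite <- vscale_adds, <- s_of_R1, s_of_R_add, Rplus_opp_r, s_of_R0. apply vscale0.
Qed.

Lemma vnorm0 : vnorm (vzero X) = 0.
Proof. apply vnorm_zero_iff. reflexivity. Qed.

Lemma vnorm_scale_R (r : R) x : vnorm (vscale (s_of_R k r) x) = Rabs r * vnorm x.
Proof. rewrite vnorm_scale, s_abs_of_R. reflexivity. Qed.

Lemma vnorm_opp x : vnorm (vopp x) = vnorm x.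
Proof. rewrite voppE, vnorm_scale_R, Rabs_left by lra. ring. Qed.

Lemma vnorm_ge0 x : 0 <= vnorm x.
Proof.
  pose proof (vnorm_triangle _ _ x (vopp x)) as H.
  rewrite vadd_opp, vnorm0, vnorm_opp in H. lra.
Qed.

Lemma vnorm_gt0 x : x <> vzero X -> 0 < vnorm x.
Proof.
  intro Hx. destruct (vnorm_ge0 x) as [|H]; [assumption|].
  exfalso. apply Hx, vnorm_zero_iff. symmetry. exact H.
Qed.

Lemma vaddACA x y z (w : X) : vadd (vadd x y) (vadd z w) = vadd (vadd x z) (vadd y w).
Proof.
  rewrite <- !vadd_assoc. f_equal. rewrite !vadd_assoc. f_equal. apply vadd_comm.
Qed.

Lemma vopp_add x y : vopp (vadd x y) = vadd (vopp x) (vopp y).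
Proof. rewrite !voppE. apply vscale_addv. Qed.

Lemma vopp_scale (c : scal k) x : vopp (vscale c x) = vscale c (vopp x).
Proof. rewrite !voppE, !vscale_assoc, s_mulC. reflexivity. Qed.

Lemma vsubrr x : vsub x x = vzero X.
Proof. apply vadd_opp. Qed.

Lemma vsubr0 x : vsub x (vzero X) = x.
Proof. unfold vsub. rewrite voppE, vscaler0. apply vadd_zero. Qed.

Lemma vsub_add x y z : vadd (vsub x y) (vsub y z) = vsub x z.
Proof.
  unfold vsub. rewrite <- vadd_assoc. f_equal.
  rewrite vadd_assoc, (vadd_comm _ _ (vopp y) y), vadd_opp. apply vadd0l.
Qed.

Lemma vsub_eq0 x y : vsub x y = vzero X -> x = y.
Proof.
  intro H. transitivity (vadd (vsub x y) y); [|rewrite H; apply vadd0l].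
  unfold vsub. rewrite <- vadd_assoc, (vadd_comm _ _ (vopp y) y), vadd_opp, vadd_zero.
  reflexivity.
Qed.

Lemma vsub_triangle x y z : vnorm (vsub x z) <= vnorm (vsub x y) + vnorm (vsub y z).
Proof. rewrite <- (vsub_add x y z). apply vnorm_triangle. Qed.

Lemma vdistC x y : vnorm (vsub x y) = vnorm (vsub y x).
Proof.
  rewrite <- vnorm_opp. f_equal. symmetry. apply vopp_unique.
  rewrite vsub_add. apply vsubrr.
Qed.

Lemma vnorm_le_sub x y : vnorm x <= vnorm y + vnorm (vsub x y).
Proof.
  pose proof (vsub_triangle x y (vzero X)) as H. rewrite !vsubr0 in H. lra.
Qed.

Lemma vsub_addACA x y z (w : X) :
  vsub (vadd x y) (vadd z w) = vadd (vsub x z) (vsub y w).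
Proof. unfold vsub. rewrite vopp_add. apply vaddACA. Qed.

Lemma vsub_scale (c : scal k) x y : vsub (vscale c x) (vscale c y) = vscale c (vsub x y).
Proof. unfold vsub. rewrite vopp_scale, vscale_addv. reflexivity. Qed.

Definition vmid x y : X := vscale (s_of_R k (1/2)) (vadd x y).

Lemma vmid_le x y : vnorm (vmid x y) <= / 2 * (vnorm x + vnorm y).
Proof.
  unfold vmid. rewrite vnorm_scale_R, Rabs_right by lra.
  pose proof (vnorm_triangle _ _ x y). lra.
Qed.

Section Span.
Variables e1 e2 : X.

Definition lin (a b : scal k) : X := vadd (vscale a e1) (vscale b e2).

Lemma lin_add a b c d : vadd (lin a b) (lin c d) = lin (s_add k a c) (s_add k b d).
Proof. unfold lin. rewrite vaddACA, !vscale_adds. reflexivity. Qed.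

Lemma lin_scale c a b : vscale c (lin a b) = lin (s_mul k c a) (s_mul k c b).
Proof. unfold lin. rewrite vscale_addv, !vscale_assoc. reflexivity. Qed.

Lemma lin_sub a b c d : vsub (lin a b) (lin c d) = lin (s_sub k a c) (s_sub k b d).
Proof.
  unfold vsub, s_sub. rewrite voppE, lin_scale, lin_add, <- !s_oppE. reflexivity.
Qed.

Lemma lin_a0 a : lin a (s_zero k) = vscale a e1.
Proof. unfold lin. rewrite vscale0. apply vadd_zero. Qed.

Lemma lin_0b b : lin (s_zero k) b = vscale b e2.
Proof. unfold lin. rewrite vscale0. apply vadd0l. Qed.
Lemma lin_sub_a0 a b : vsub (lin a b) (lin a (s_zero k)) = lin (s_zero k) b.
Proof. rewrite lin_sub, s_subrr, s_subr0. reflexivity. Qed.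
End Span.
End NormedSpaceFacts.

Arguments vmid {k X}.
Arguments lin {k X}.

(** * Extraction of convergent subsequences *)

Definition extraction (phi : nat -> nat) : Prop := forall n, (phi n < phi (S n))%nat.

Lemma extraction_le phi : extraction phi -> forall n m, (n <= m)%nat -> (phi n <= phi m)%nat.
Proof. intros Hphi n m Hnm. induction Hnm as [|m _ IH]; [lia|]. specialize (Hphi m). lia. Qed.

Lemma extraction_ge phi : extraction phi -> forall n, (n <= phi n)%nat.
Proof. intros Hphi n. induction n as [|n IH]; [lia|]. specialize (Hphi n). lia. Qed.

Lemma extraction_comp phi psi :
  extraction phi -> extraction psi -> extraction (fun n => phi (psi n)).
Proof.
  intros Hphi Hpsi n. pose proof (Hpsi n).
  pose proof (extraction_le phi Hphi (S (psi n)) (psi (S n)) ltac:(lia)).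
  specialize (Hphi (psi n)). lia.
Qed.

Lemma inv_succ_pos (n : nat) : 0 < / (INR n + 1).
Proof. apply Rinv_0_lt_compat. pose proof (pos_INR n). lra. Qed.

Lemma inv_succ_le (n m : nat) : (n <= m)%nat -> / (INR m + 1) <= / (INR n + 1).
Proof.
  intro Hnm. apply Rinv_le_contravar; [pose proof (pos_INR n); lra|].
  apply le_INR in Hnm. lra.
Qed.

Lemma inv_succ_small eps : eps > 0 -> exists N : nat, / (INR N + 1) < eps.
Proof.
  intro Heps. destruct (archimed_cor1 eps Heps) as [N [HN HN0]]. exists N.
  apply Rle_lt_trans with (/ INR N); [|assumption].
  apply Rinv_le_contravar; [apply lt_0_INR; assumption | lra].
Qed.

Lemma Un_cv_extract (u : nat -> R) l phi :
  extraction phi -> Un_cv u l -> Un_cv (fun n => u (phi n)) l.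
Proof.
  intros Hphi Hu eps Heps. destruct (Hu eps Heps) as [N HN]. exists N. intros n Hn.
  apply HN. pose proof (extraction_ge phi Hphi n). lia.
Qed.

Lemma extraction_of_adherence (u : nat -> R) (l : R) :
  (forall N m : nat, exists p, (N <= p)%nat /\ Rabs (u p - l) < / (INR m + 1)) ->
  exists phi, extraction phi /\ Un_cv (fun n => u (phi n)) l.
Proof.
  intro Hadh.
  assert (Hc : forall N m : nat, {p : nat | (N <= p)%nat /\ Rabs (u p - l) < / (INR m + 1)})
    by (intros N m; apply constructive_indefinite_description, Hadh).
  set (phi := fix phi n := match n with
     | O => proj1_sig (Hc O O)
     | S n' => proj1_sig (Hc (S (phi n')) (S n')) end).
  assert (Hphi : forall n, Rabs (u (phi n) - l) < / (INR n + 1)).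
  { intros [|n]; [exact (proj2 (proj2_sig (Hc O O)))|].
    exact (proj2 (proj2_sig (Hc (S (phi n)) (S n)))). }
  exists phi. split.
  - intro n. exact (proj1 (proj2_sig (Hc (S (phi n)) (S n)))).
  - intros eps Heps. destruct (inv_succ_small eps Heps) as [N HN]. exists N. intros n Hn.
    pose proof (Hphi n). pose proof (inv_succ_le N n Hn). unfold R_dist. lra.
Qed.

Lemma bolzano_weierstrass_R (u : nat -> R) (M : R) : (forall n, Rabs (u n) <= M) ->
  exists phi l, extraction phi /\ Un_cv (fun n => u (phi n)) l.
Proof.
  intro HM.
  destruct (Bolzano_Weierstrass u (fun c => -M <= c <= M) (compact_P3 (-M) M)) as [l Hl].
  { intro n. specialize (HM n). unfold Rabs in HM. destruct (Rcase_abs (u n)); lra. }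
  destruct (extraction_of_adherence u l) as [phi Hphi].
  - intros N m. destruct (Hl (disc l (mkposreal _ (inv_succ_pos m))) N) as [p Hp].
    + exists (mkposreal _ (inv_succ_pos m)). intros y Hy. exact Hy.
    + exists p. exact Hp.
  - exists phi, l. exact Hphi.
Qed.

Definition s_cvg {k} (t : nat -> scal k) (l : scal k) : Prop :=
  forall eps, eps > 0 -> exists N, forall n, (n >= N)%nat -> s_abs k (s_sub k (t n) l) < eps.

Lemma Cmod_le_abs_sum (x y : R) : sqrt (x * x + y * y) <= Rabs x + Rabs y.
Proof.
  pose proof (Rabs_pos x). pose proof (Rabs_pos y).
  rewrite <- (sqrt_square (Rabs x + Rabs y)) by lra. apply sqrt_le_1_alt.
  assert (Hx : x * x = Rabs x * Rabs x) by (rewrite <- Rabs_mult, Rabs_right; nra).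
  assert (Hy : y * y = Rabs y * Rabs y) by (rewrite <- Rabs_mult, Rabs_right; nra).
  nra.
Qed.

Lemma bolzano_weierstrass_s k (t : nat -> scal k) (M : R) : (forall n, s_abs k (t n) <= M) ->
  exists phi l, extraction phi /\ s_cvg (fun n => t (phi n)) l.
Proof.
  destruct k; simpl; intro HM; [exact (bolzano_weierstrass_R t M HM)|].
  destruct (bolzano_weierstrass_R (fun n => fst (t n)) M) as [phi [l1 [Hphi H1]]].
  { intro n. eapply Rle_trans; [|apply (HM n)]. rewrite <- sqrt_Rsqr_abs.
    apply sqrt_le_1_alt. unfold Rsqr. nra. }
  destruct (bolzano_weierstrass_R (fun n => snd (t (phi n))) M) as [psi [l2 [Hpsi H2]]].
  { intro n. eapply Rle_trans; [|apply (HM (phi n))]. rewrite <- sqrt_Rsqr_abs.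
    apply sqrt_le_1_alt. unfold Rsqr. nra. }
  exists (fun n => phi (psi n)), (l1, l2). split; [apply extraction_comp; assumption|].
  intros eps Heps.
  destruct (Un_cv_extract _ _ psi Hpsi H1 (eps/2)) as [N1 HN1]; [lra|].
  destruct (H2 (eps/2)) as [N2 HN2]; [lra|].
  exists (max N1 N2). intros n Hn. eapply Rle_lt_trans; [apply Cmod_le_abs_sum|].
  specialize (HN1 n ltac:(lia)). specialize (HN2 n ltac:(lia)). unfold R_dist in *. simpl.
  unfold Rminus in *. lra.
Qed.

Lemma s_cvg_extract k (t : nat -> scal k) l phi :
  extraction phi -> s_cvg t l -> s_cvg (fun n => t (phi n)) l.
Proof.
  intros Hphi Ht eps Heps. destruct (Ht eps Heps) as [N HN]. exists N. intros n Hn.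
  apply HN. pose proof (extraction_ge phi Hphi n). lia.
Qed.

Section Compactness.
Variable k : scalar_kind.
Variable X : NormedSpace k.

Definition v_cvg (u : nat -> X) (l : X) : Prop :=
  forall eps, eps > 0 -> exists N, forall n, (n >= N)%nat -> vnorm (vsub (u n) l) < eps.

Lemma v_cvg_add u v l m :
  v_cvg u l -> v_cvg v m -> v_cvg (fun n => vadd (u n) (v n)) (vadd l m).
Proof.
  intros Hu Hv eps Heps.
  destruct (Hu (eps/2)) as [N1 H1]; [lra|]. destruct (Hv (eps/2)) as [N2 H2]; [lra|].
  exists (max N1 N2). intros n Hn. rewrite vsub_addACA.
  eapply Rle_lt_trans; [apply vnorm_triangle|].
  specialize (H1 n ltac:(lia)). specialize (H2 n ltac:(lia)). lra.
Qed.

Lemma v_cvg_scale c u l : v_cvg u l -> v_cvg (fun n => vscale c (u n)) (vscale c l).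
Proof.
  intros Hu eps Heps. pose proof (s_abs_ge0 k c) as Hc.
  destruct (Hu (eps / (s_abs k c + 1))) as [N HN]; [apply Rdiv_lt_0_compat; lra|].
  exists N. intros n Hn. rewrite vsub_scale, vnorm_scale.
  specialize (HN n Hn). pose proof (vnorm_ge0 _ _ (vsub (u n) l)).
  assert ((s_abs k c + 1) * (eps / (s_abs k c + 1)) = eps) by (field; lra).
  nra.
Qed.

Lemma v_cvg_opp u l : v_cvg u l -> v_cvg (fun n => vopp (u n)) (vopp l).
Proof.
  intros Hu eps Heps. destruct (Hu eps Heps) as [N HN]. exists N. intros n Hn.
  rewrite !voppE, vsub_scale, vnorm_scale_R, Rabs_left by lra.
  specialize (HN n Hn). lra.
Qed.

Lemma v_cvg_sub u v l m :
  v_cvg u l -> v_cvg v m -> v_cvg (fun n => vsub (u n) (v n)) (vsub l m).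
Proof. intros Hu Hv. exact (v_cvg_add _ _ _ _ Hu (v_cvg_opp _ _ Hv)). Qed.

Lemma v_cvg_mid u v l m :
  v_cvg u l -> v_cvg v m -> v_cvg (fun n => vmid (u n) (v n)) (vmid l m).
Proof. intros Hu Hv. exact (v_cvg_scale _ _ _ (v_cvg_add _ _ _ _ Hu Hv)). Qed.

Lemma v_cvg_extract u l phi : extraction phi -> v_cvg u l -> v_cvg (fun n => u (phi n)) l.
Proof.
  intros Hphi Hu eps Heps. destruct (Hu eps Heps) as [N HN]. exists N. intros n Hn.
  apply HN. pose proof (extraction_ge phi Hphi n). lia.
Qed.

Lemma v_cvg_norm_le u l c : v_cvg u l -> (forall n, vnorm (u n) <= c) -> vnorm l <= c.
Proof.
  intros Hu Hc. apply Rle_plus_epsilon. intros eps Heps. destruct (Hu eps Heps) as [N HN].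
  pose proof (vnorm_le_sub _ _ l (u N)) as H. rewrite vdistC in H.
  specialize (HN N (le_n N)). specialize (Hc N). lra.
Qed.

Lemma v_cvg_norm_ge u l c :
  v_cvg u l -> (forall n, c - / (INR n + 1) <= vnorm (u n)) -> c <= vnorm l.
Proof.
  intros Hu Hc. apply Rle_plus_epsilon. intros eps Heps.
  destruct (Hu (eps/2)) as [N1 H1]; [lra|].
  destruct (inv_succ_small (eps/2)) as [N2 H2]; [lra|].
  pose proof (vnorm_le_sub _ _ (u (max N1 N2)) l).
  specialize (H1 (max N1 N2) ltac:(lia)). specialize (Hc (max N1 N2)).
  pose proof (inv_succ_le N2 (max N1 N2) ltac:(lia)). lra.
Qed.

Definition bounded_seq_compact : Prop :=
  forall (u : nat -> X) (M : R), (forall n, vnorm (u n) <= M) ->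
    exists phi l, extraction phi /\ v_cvg (fun n => u (phi n)) l.

Definition strictly_convex : Prop :=
  forall x y : X, vnorm x = 1 -> vnorm y = 1 -> x <> y -> vnorm (vmid x y) < 1.

Lemma not_uniformly_convex_seq : ~ uniformly_convex X ->
  exists eps, eps > 0 /\ exists x y : nat -> X, forall n,
    vnorm (x n) <= 1 /\ vnorm (y n) <= 1 /\ vnorm (vsub (x n) (y n)) >= eps /\
    vnorm (vmid (x n) (y n)) > 1 - / (INR n + 1).
Proof.
  intro Hno. apply NNPP. intro Hall. apply Hno. intros eps Heps.
  apply NNPP. intro Hno_delta. apply Hall. exists eps. split; [exact Heps|].
  destruct (choice (fun n (xy : X * X) =>
    vnorm (fst xy) <= 1 /\ vnorm (snd xy) <= 1 /\ vnorm (vsub (fst xy) (snd xy)) >= eps /\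
    vnorm (vmid (fst xy) (snd xy)) > 1 - / (INR n + 1))) as [f Hf].
  - intro n. apply NNPP. intro Hn. apply Hno_delta.
    exists (/ (INR n + 1)). split; [apply inv_succ_pos|].
    intros x y Hx Hy Hxy. apply Rnot_gt_le. intro Hgt. apply Hn. exists (x, y). auto.
  - exists (fun n => fst (f n)), (fun n => snd (f n)). exact Hf.
Qed.

Hypothesis compact : bounded_seq_compact.

Lemma complete_of_compact : complete X.
Proof.
  intros u Hc. destruct (Hc 1 Rlt_0_1) as [N0 HN0].
  destruct (compact (fun n => u (N0 + n)%nat) (vnorm (u N0) + 1)) as [phi [l [Hphi Hl]]].
  { intro n. pose proof (vnorm_le_sub _ _ (u (N0 + n)%nat) (u N0)).
    specialize (HN0 (N0 + n)%nat N0 ltac:(lia) ltac:(lia)). lra. }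
  exists l. intros eps Heps.
  destruct (Hc (eps/2)) as [N1 HN1]; [lra|]. destruct (Hl (eps/2)) as [N2 HN2]; [lra|].
  exists N1. intros n Hn. pose proof (extraction_ge phi Hphi (max N1 N2)).
  eapply Rle_lt_trans; [apply (vsub_triangle _ _ _ (u (N0 + phi (max N1 N2))%nat))|].
  specialize (HN1 n (N0 + phi (max N1 N2))%nat Hn ltac:(lia)).
  specialize (HN2 (max N1 N2) ltac:(lia)). simpl in HN2. lra.
Qed.

Lemma compact_pair (x y : nat -> X) (M : R) :
  (forall n, vnorm (x n) <= M) -> (forall n, vnorm (y n) <= M) ->
  exists phi lx ly, extraction phi /\
    v_cvg (fun n => x (phi n)) lx /\ v_cvg (fun n => y (phi n)) ly.
Proof.
  intros Hx Hy.
  destruct (compact x M Hx) as [phi [lx [Hphi Hlx]]].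
  destruct (compact (fun n => y (phi n)) M (fun n => Hy (phi n))) as [psi [ly [Hpsi Hly]]].
  exists (fun n => phi (psi n)), lx, ly.
  split; [apply extraction_comp; assumption|].
  split; [exact (v_cvg_extract _ _ psi Hpsi Hlx) | exact Hly].
Qed.

Lemma uniformly_convex_of_strictly_convex : strictly_convex -> uniformly_convex X.
Proof.
  intro Hsc. apply NNPP. intro Hno.
  destruct (not_uniformly_convex_seq Hno) as [eps [Heps [x [y Hxy]]]].
  destruct (compact_pair x y 1 (fun n => proj1 (Hxy n)) (fun n => proj1 (proj2 (Hxy n))))
    as [phi [lx [ly [Hphi [Hx Hy]]]]].
  assert (Hlx : vnorm lx <= 1) by exact (v_cvg_norm_le _ _ _ Hx (fun n => proj1 (Hxy (phi n)))).
  assert (Hly : vnorm ly <= 1)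
    by exact (v_cvg_norm_le _ _ _ Hy (fun n => proj1 (proj2 (Hxy (phi n))))).
  assert (Hdist : eps <= vnorm (vsub lx ly)).
  { apply (v_cvg_norm_ge _ _ _ (v_cvg_sub _ _ _ _ Hx Hy)). intro n.
    pose proof (inv_succ_pos n). pose proof (Hxy (phi n)). lra. }
  assert (Hmid : 1 <= vnorm (vmid lx ly)).
  { apply (v_cvg_norm_ge _ _ _ (v_cvg_mid _ _ _ _ Hx Hy)). intro n.
    pose proof (inv_succ_le _ _ (extraction_ge phi Hphi n)). pose proof (Hxy (phi n)). lra. }
  pose proof (vmid_le _ _ lx ly).
  assert (Hne : lx <> ly) by (intros ->; rewrite vsubrr, vnorm0 in Hdist; lra).
  pose proof (Hsc lx ly ltac:(lra) ltac:(lra) Hne). lra.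
Qed.
End Compactness.

Arguments v_cvg {k X}.
Arguments bounded_seq_compact {k}.
Arguments strictly_convex {k}.

(** * Birkhoff orthogonality in a two-dimensional span *)

Definition birkhoff_orth {k} {X : NormedSpace k} (x y : X) : Prop :=
  forall s : scal k, vnorm x <= vnorm (vadd x (vscale s y)).

Definition strictly_convex_span {k} {X : NormedSpace k} (u v : X) : Prop :=
  forall x y : X, in_span2 u v x -> in_span2 u v y -> in_sphere x -> in_sphere y -> x <> y ->
    vnorm (vmid x y) < 1.

Section SpanFacts.
Variable k : scalar_kind.
Variable X : NormedSpace k.
Variables u v : X.

Lemma in_span2_lin a b : in_span2 u v (lin u v a b).
Proof. exists a, b. reflexivity. Qed.

Lemma in_span2_right : in_span2 u v v.
Proof.
  exists (s_zero k), (s_one k). rewrite vscale0, vscale_one. symmetry. apply vadd0l.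
Qed.

Lemma in_span2_scale c x : in_span2 u v x -> in_span2 u v (vscale c x).
Proof.
  intros [a [b ->]]. fold (lin u v a b). rewrite lin_scale. apply in_span2_lin.
Qed.

Lemma in_span2_sub (e1 e2 x : X) :
  in_span2 u v e1 -> in_span2 u v e2 -> in_span2 e1 e2 x -> in_span2 u v x.
Proof.
  intros [a [b ->]] [c [d ->]] [p [q ->]].
  fold (lin u v a b) (lin u v c d). rewrite !lin_scale, lin_add. apply in_span2_lin.
Qed.

Lemma strictly_convex_span_sub (e1 e2 : X) :
  in_span2 u v e1 -> in_span2 u v e2 -> strictly_convex_span u v -> strictly_convex_span e1 e2.
Proof.
  intros H1 H2 Hsc x y Hx Hy.
  apply Hsc; [exact (in_span2_sub _ _ _ H1 H2 Hx) | exact (in_span2_sub _ _ _ H1 H2 Hy)].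
Qed.

Lemma birkhoff_orth_scale (x y : X) (c d : scal k) :
  birkhoff_orth x y -> c <> s_zero k -> birkhoff_orth (vscale c x) (vscale d y).
Proof.
  intros Hxy Hc s.
  assert (E : vadd (vscale c x) (vscale s (vscale d y)) =
              vscale c (vadd x (vscale (s_mul k (s_inv k c) (s_mul k s d)) y))).
  { rewrite vscale_addv, !vscale_assoc, s_mulA, s_mulV, s_mul1r by exact Hc. reflexivity. }
  rewrite E, !vnorm_scale. apply Rmult_le_compat_l; [apply s_abs_ge0 | apply Hxy].
Qed.

Lemma vnorm_normalize (x : X) : x <> vzero X -> vnorm (vscale (s_of_R k (/ vnorm x)) x) = 1.
Proof.
  intro Hx. pose proof (vnorm_gt0 _ _ x Hx).
  rewrite vnorm_scale_R, Rabs_right, Rinv_l by (try apply Rle_ge, Rlt_le, Rinv_0_lt_compat; lra).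
  reflexivity.
Qed.
End SpanFacts.

Lemma s_of_R_neq0 k (r : R) : r <> 0 -> s_of_R k r <> s_zero k.
Proof.
  intros Hr H. apply (Rabs_no_R0 r Hr). rewrite <- (s_abs_of_R k), H. apply s_abs0.
Qed.

Lemma minimizing_seq (T : Type) (f : T -> R) (t0 : T) : (forall t, 0 <= f t) ->
  exists m (ts : nat -> T), (forall t, m <= f t) /\ forall n, f (ts n) < m + / (INR n + 1).
Proof.
  intro Hf.
  destruct (completeness (fun r => exists t, r = - f t)) as [m' [Hub Hlub]].
  - exists 0. intros r [t ->]. specialize (Hf t). lra.
  - exists (- f t0), t0. reflexivity.
  - assert (Hm : forall t, - m' <= f t).
    { intro t. pose proof (Hub (- f t) (ex_intro _ t eq_refl)). lra. }
    assert (Hseq : forall n : nat, exists t, f t < - m' + / (INR n + 1)).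
    { intro n. apply NNPP. intro Hn. pose proof (inv_succ_pos n).
      assert (Hub' : is_upper_bound (fun r => exists t, r = - f t) (m' - / (INR n + 1))).
      { intros r [t ->]. apply Rnot_lt_le. intro Hlt. apply Hn. exists t. lra. }
      pose proof (Hlub _ Hub'). lra. }
    destruct (choice _ Hseq) as [ts Hts]. exists (- m'), ts. split; assumption.
Qed.

Section OrthonormalPair.
Variable k : scalar_kind.
Variable Y : NormedSpace k.
Variables u v : Y.
Hypothesis Hind : forall a b, lin u v a b = vzero Y -> a = s_zero k /\ b = s_zero k.

Lemma lin_neq0 a b : a <> s_zero k -> lin u v a b <> vzero Y.
Proof. intros Ha H. apply Ha, (Hind a b H). Qed.

Lemma v_neq0 : v <> vzero Y.
Proof.
  intro Hv. apply (s_one_neq0 k), (Hind (s_zero k) (s_one k)).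
  rewrite lin_0b, vscale_one. exact Hv.
Qed.

Lemma line_sub t t' :
  vsub (lin u v (s_one k) t) (lin u v (s_one k) t') = vscale (s_sub k t t') v.
Proof. rewrite lin_sub, s_subrr. apply lin_0b. Qed.

Lemma line_coercive t : s_abs k t * vnorm v <= vnorm u + vnorm (lin u v (s_one k) t).
Proof.
  pose proof (vnorm_triangle _ _ (lin u v (s_one k) t) (vopp (lin u v (s_one k) (s_zero k))))
    as H.
  fold (vsub (lin u v (s_one k) t) (lin u v (s_one k) (s_zero k))) in H.
  rewrite line_sub, s_subr0, vnorm_scale, vnorm_opp, lin_a0, vscale_one in H. lra.
Qed.

Lemma line_lipschitz t t' :
  vnorm (lin u v (s_one k) t) <=
  vnorm (lin u v (s_one k) t') + s_abs k (s_sub k t' t) * vnorm v.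
Proof.
  pose proof (vnorm_le_sub _ _ (lin u v (s_one k) t) (lin u v (s_one k) t')) as H.
  rewrite vdistC, line_sub, vnorm_scale in H. exact H.
Qed.

Lemma line_dist_minimizer :
  exists t0, forall t, vnorm (lin u v (s_one k) t0) <= vnorm (lin u v (s_one k) t).
Proof.
  pose proof (vnorm_gt0 _ _ v v_neq0) as Hv.
  destruct (minimizing_seq _ (fun t => vnorm (lin u v (s_one k) t)) (s_zero k))
    as [m [ts [Hm Hts]]]; [intro; apply vnorm_ge0|].
  destruct (bolzano_weierstrass_s k ts ((vnorm u + m + 1) / vnorm v)) as [phi [t0 [Hphi Ht0]]].
  { intro n. apply Rmult_le_reg_r with (vnorm v); [exact Hv|].
    unfold Rdiv. rewrite Rmult_assoc, Rinv_l, Rmult_1_r by lra.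
    pose proof (line_coercive (ts n)). pose proof (Hts n).
    pose proof (inv_succ_le 0 n ltac:(lia)). simpl INR in *. lra. }
  exists t0. intro t. eapply Rle_trans; [|apply Hm]. apply Rle_plus_epsilon. intros eps Heps.
  destruct (Ht0 (eps / 2 / vnorm v)) as [N1 HN1]; [apply Rdiv_lt_0_compat; lra|].
  destruct (inv_succ_small (eps / 2)) as [N2 HN2]; [lra|].
  specialize (HN1 (max N1 N2) ltac:(lia)).
  pose proof (line_lipschitz t0 (ts (phi (max N1 N2)))).
  pose proof (Hts (phi (max N1 N2))).
  pose proof (inv_succ_le N2 (phi (max N1 N2))
                (Nat.le_trans _ _ _ (Nat.le_max_r N1 N2) (extraction_ge phi Hphi _))).
  assert (s_abs k (s_sub k (ts (phi (max N1 N2))) t0) * vnorm v < eps / 2).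
  { apply Rmult_lt_reg_r with (/ vnorm v); [apply Rinv_0_lt_compat; exact Hv|].
    rewrite Rmult_assoc, Rinv_r, Rmult_1_r by lra. exact HN1. }
  lra.
Qed.

Lemma birkhoff_orth_exists : exists w, in_span2 u v w /\ w <> vzero Y /\ birkhoff_orth w v.
Proof.
  destruct line_dist_minimizer as [t0 Ht0].
  exists (lin u v (s_one k) t0). split; [apply in_span2_lin|].
  split; [apply lin_neq0, s_one_neq0|].
  intro s. unfold lin at 2. rewrite <- vadd_assoc, <- vscale_adds. apply Ht0.
Qed.

Lemma orthonormal_pair_in_span : exists e1 e2 : Y,
  vnorm e1 = 1 /\ vnorm e2 = 1 /\ birkhoff_orth e1 e2 /\ in_span2 u v e1 /\ in_span2 u v e2.
Proof.
  destruct birkhoff_orth_exists as [w [Hw [Hw0 Horth]]].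
  exists (vscale (s_of_R k (/ vnorm w)) w), (vscale (s_of_R k (/ vnorm v)) v).
  split; [apply vnorm_normalize, Hw0|]. split; [apply vnorm_normalize, v_neq0|].
  split; [apply birkhoff_orth_scale; [exact Horth|]|].
  { apply s_of_R_neq0, Rinv_neq_0_compat, Rgt_not_eq, vnorm_gt0, Hw0. }
  split; apply in_span2_scale; [exact Hw | apply in_span2_right].
Qed.
End OrthonormalPair.

(** * The plane [K^2] normed through [Y] *)

Section Plane.
Variable k : scalar_kind.
Variable Y : NormedSpace k.
Variables e1 e2 : Y.
Hypothesis He1 : vnorm e1 = 1.
Hypothesis He2 : vnorm e2 = 1.
Hypothesis Horth : birkhoff_orth e1 e2.

Notation L := (lin e1 e2).

Lemma vnorm_lin_a0 a : vnorm (L a (s_zero k)) = s_abs k a.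
Proof. rewrite lin_a0, vnorm_scale, He1. ring. Qed.

Lemma vnorm_lin_0b b : vnorm (L (s_zero k) b) = s_abs k b.
Proof. rewrite lin_0b, vnorm_scale, He2. ring. Qed.

Lemma vnorm_lin_le a b : vnorm (L a b) <= s_abs k a + s_abs k b.
Proof.
  unfold lin. eapply Rle_trans; [apply vnorm_triangle|]. rewrite !vnorm_scale, He1, He2. lra.
Qed.

Lemma vnorm_lin_ge_fst a b : s_abs k a <= vnorm (L a b).
Proof.
  destruct (classic (a = s_zero k)) as [->|Ha]; [rewrite s_abs0; apply vnorm_ge0|].
  assert (E : L a b = vscale a (vadd e1 (vscale (s_mul k (s_inv k a) b) e2))).
  { unfold lin. rewrite vscale_addv, vscale_assoc, s_mulA, s_mulV, s_mul1r by exact Ha.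
    reflexivity. }
  rewrite E, vnorm_scale. pose proof (Horth (s_mul k (s_inv k a) b)) as H.
  rewrite He1 in H. pose proof (s_abs_ge0 k a). nra.
Qed.

Lemma vnorm_lin_ge_snd a b : s_abs k b <= 2 * vnorm (L a b).
Proof.
  rewrite <- vnorm_lin_0b, <- (lin_sub_a0 _ _ _ _ a). unfold vsub. eapply Rle_trans; [apply vnorm_triangle|].
  rewrite vnorm_opp, vnorm_lin_a0. pose proof (vnorm_lin_ge_fst a b). lra.
Qed.

Lemma lin_eq0 a b : L a b = vzero Y -> a = s_zero k /\ b = s_zero k.
Proof.
  intro H. pose proof (vnorm_lin_ge_fst a b) as Ha.
  rewrite H, vnorm0 in Ha. pose proof (s_abs_ge0 k a).
  assert (Ha0 : a = s_zero k) by (apply s_abs_eq0; lra). subst a.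
  split; [reflexivity|]. apply s_abs_eq0. rewrite <- vnorm_lin_0b, H. apply vnorm0.
Qed.

Definition pl_zero : scal k * scal k := (s_zero k, s_zero k).
Definition pl_add (x y : scal k * scal k) := (s_add k (fst x) (fst y), s_add k (snd x) (snd y)).
Definition pl_opp (x : scal k * scal k) := (s_opp k (fst x), s_opp k (snd x)).
Definition pl_scale (c : scal k) (x : scal k * scal k) := (s_mul k c (fst x), s_mul k c (snd x)).
Definition pl_norm (x : scal k * scal k) : R := vnorm (L (fst x) (snd x)).

Lemma pl_addA x y z : pl_add x (pl_add y z) = pl_add (pl_add x y) z.
Proof. unfold pl_add; simpl; f_equal; apply s_addA. Qed.
Lemma pl_addC x y : pl_add x y = pl_add y x.
Proof. unfold pl_add; f_equal; apply s_addC. Qed.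
Lemma pl_addr0 x : pl_add x pl_zero = x.
Proof. destruct x; unfold pl_add; simpl; f_equal; apply s_addr0. Qed.
Lemma pl_addrN x : pl_add x (pl_opp x) = pl_zero.
Proof. unfold pl_add, pl_zero; simpl; f_equal; apply s_subrr. Qed.
Lemma pl_scale1 x : pl_scale (s_one k) x = x.
Proof. destruct x; unfold pl_scale; simpl; f_equal; apply s_mul1r. Qed.
Lemma pl_scaleA a b x : pl_scale a (pl_scale b x) = pl_scale (s_mul k a b) x.
Proof. unfold pl_scale; simpl; f_equal; apply s_mulA. Qed.
Lemma pl_scaleDr a x y : pl_scale a (pl_add x y) = pl_add (pl_scale a x) (pl_scale a y).
Proof. unfold pl_scale, pl_add; simpl; f_equal; apply s_mulDr. Qed.
Lemma pl_scaleDl a b x : pl_scale (s_add k a b) x = pl_add (pl_scale a x) (pl_scale b x).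
Proof. unfold pl_scale, pl_add; simpl; f_equal; apply s_mulDl. Qed.
Lemma pl_norm_eq0 x : pl_norm x = 0 <-> x = pl_zero.
Proof.
  destruct x as [a b]. unfold pl_norm, pl_zero; simpl. split.
  - intro H. apply vnorm_zero_iff, lin_eq0 in H. destruct H as [-> ->]. reflexivity.
  - intro H. injection H as -> ->. rewrite lin_a0, vscale0. apply vnorm0.
Qed.
Lemma pl_norm_scale a x : pl_norm (pl_scale a x) = s_abs k a * pl_norm x.
Proof. unfold pl_norm, pl_scale; simpl. rewrite <- lin_scale. apply vnorm_scale. Qed.
Lemma pl_norm_triangle x y : pl_norm (pl_add x y) <= pl_norm x + pl_norm y.
Proof. unfold pl_norm, pl_add; simpl. rewrite <- lin_add. apply vnorm_triangle. Qed.

Definition plane : NormedSpace k :=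
  Build_NormedSpace k (scal k * scal k) pl_zero pl_add pl_opp pl_scale pl_norm
    pl_addA pl_addC pl_addr0 pl_addrN pl_scale1 pl_scaleA pl_scaleDr pl_scaleDl
    pl_norm_eq0 pl_norm_scale pl_norm_triangle.

Lemma plane_vnorm (x : plane) : vnorm x = vnorm (L (fst x) (snd x)).
Proof. reflexivity. Qed.

Lemma plane_vsub (x y : plane) :
  vsub x y = (s_sub k (fst x) (fst y), s_sub k (snd x) (snd y)) :> plane.
Proof. reflexivity. Qed.

Lemma plane_compact : bounded_seq_compact plane.
Proof.
  intros x M HM.
  destruct (bolzano_weierstrass_s k (fun n => fst (x n)) M) as [phi [a [Hphi Ha]]].
  { intro n. exact (Rle_trans _ _ _ (vnorm_lin_ge_fst _ _) (HM n)). }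
  destruct (bolzano_weierstrass_s k (fun n => snd (x (phi n))) (2 * M)) as [psi [b [Hpsi Hb]]].
  { intro n. exact (Rle_trans _ _ _ (vnorm_lin_ge_snd _ _)
                      (Rmult_le_compat_l 2 _ _ ltac:(lra) (HM (phi n)))). }
  exists (fun n => phi (psi n)), (a, b). split; [apply extraction_comp; assumption|].
  intros eps Heps.
  destruct (s_cvg_extract k _ _ psi Hpsi Ha (eps/2)) as [N1 HN1]; [lra|].
  destruct (Hb (eps/2)) as [N2 HN2]; [lra|].
  exists (max N1 N2). intros n Hn. rewrite plane_vsub, plane_vnorm.
  eapply Rle_lt_trans; [apply vnorm_lin_le|]. simpl.
  specialize (HN1 n ltac:(lia)). specialize (HN2 n ltac:(lia)). lra.
Qed.

Lemma plane_strictly_convex : strictly_convex_span e1 e2 -> strictly_convex plane.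
Proof.
  intros Hsc x y Hx Hy Hne.
  assert (Hne' : L (fst x) (snd x) <> L (fst y) (snd y)).
  { intro E. apply Hne, vsub_eq0, vnorm_zero_iff.
    rewrite plane_vsub, plane_vnorm. simpl. rewrite <- lin_sub, E, vsubrr. apply vnorm0. }
  assert (Hmid : vnorm (vmid x y) = vnorm (vmid (L (fst x) (snd x)) (L (fst y) (snd y))))
    by (unfold vmid; rewrite lin_add, lin_scale; reflexivity).
  rewrite Hmid. apply Hsc; [apply in_span2_lin | apply in_span2_lin | exact Hx | exact Hy | exact Hne'].
Qed.

Definition shrink_op (lam : R) (x : plane) : Y :=
  L (fst x) (s_mul k (s_of_R k (1 - lam)) (snd x)).

Lemma shrink_op_linear lam : is_linear (shrink_op lam).
Proof.
  split.
  - intros x y. unfold shrink_op. rewrite lin_add. f_equal. apply s_mulDr.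
  - intros c x. unfold shrink_op. rewrite lin_scale. f_equal.
    simpl. rewrite !s_mulA, (s_mulC k c). reflexivity.
Qed.

Lemma shrink_op_split lam a b : shrink_op lam (a, b) =
  vadd (vscale (s_of_R k lam) (L a (s_zero k))) (vscale (s_of_R k (1 - lam)) (L a b)).
Proof. unfold shrink_op. rewrite !lin_scale, lin_add. simpl. f_equal; scal_ring k. Qed.

Lemma shrink_op_mid lam a b : shrink_op lam (a, b) =
  vadd (vscale (s_of_R k (2 * lam)) (vmid (L a (s_zero k)) (L a b)))
       (vscale (s_of_R k (1 - 2 * lam)) (L a b)).
Proof. unfold shrink_op, vmid. rewrite lin_add, !lin_scale, lin_add. simpl. f_equal; scal_ring k. Qed.

Lemma shrink_op_norm_le lam (x : plane) : 0 <= lam <= 1 ->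
  vnorm (shrink_op lam x) <= lam * s_abs k (fst x) + (1 - lam) * vnorm x.
Proof.
  intro Hlam. destruct x as [a b]. rewrite shrink_op_split, plane_vnorm.
  eapply Rle_trans; [apply vnorm_triangle|].
  rewrite !vnorm_scale_R, vnorm_lin_a0, !Rabs_right by lra. simpl. lra.
Qed.

Lemma shrink_op_contract lam (x : plane) : 0 <= lam <= 1 -> vnorm (shrink_op lam x) <= vnorm x.
Proof.
  intro Hlam. pose proof (shrink_op_norm_le lam x Hlam).
  pose proof (vnorm_lin_ge_fst (fst x) (snd x)). rewrite plane_vnorm in *. nra.
Qed.

Lemma shrink_op_norm_one lam : 0 <= lam <= 1 -> op_norm_one (shrink_op lam).
Proof.
  intro Hlam. split.
  - intros x Hx. unfold in_sphere in Hx. rewrite <- Hx. apply shrink_op_contract, Hlam.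
  - intros d Hd. exists ((s_one k, s_zero k) : plane). split.
    + unfold in_sphere. rewrite plane_vnorm. simpl. rewrite vnorm_lin_a0. apply s_abs1.
    + unfold shrink_op. simpl. rewrite s_mulr0, vnorm_lin_a0, s_abs1. lra.
Qed.

Lemma shrink_op_attains lam (x : plane) : strictly_convex_span e1 e2 -> 0 < lam <= 1/2 ->
  vnorm x = 1 -> vnorm (shrink_op lam x) = 1 -> snd x = s_zero k /\ s_abs k (fst x) = 1.
Proof.
  intros Hsc Hlam Hx HT. destruct x as [a b].
  pose proof (shrink_op_norm_le lam (a, b) ltac:(lra)) as Hle.
  pose proof (vnorm_lin_ge_fst a b) as Ha. rewrite plane_vnorm in Hx, Hle. simpl in *.
  assert (Ha1 : s_abs k a = 1) by nra. split; [|exact Ha1].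
  apply NNPP. intro Hb.
  assert (Hne : L a (s_zero k) <> L a b).
  { intro E. apply Hb, (lin_eq0 (s_zero k) b). rewrite <- (lin_sub_a0 _ _ _ _ a), E. apply vsubrr. }
  assert (Hunit : in_sphere (L a (s_zero k))) by (unfold in_sphere; rewrite vnorm_lin_a0; exact Ha1).
  pose proof (Hsc _ _ (in_span2_lin _ _ _ _ a (s_zero k)) (in_span2_lin _ _ _ _ a b) Hunit Hx Hne).
  rewrite shrink_op_mid in HT.
  pose proof (vnorm_triangle _ _ (vscale (s_of_R k (2 * lam)) (vmid (L a (s_zero k)) (L a b)))
                                 (vscale (s_of_R k (1 - 2 * lam)) (L a b))) as Htri.
  rewrite HT, !vnorm_scale_R, !Rabs_right, Hx in Htri by lra. nra.
Qed.

Lemma plane_far_from_e2 (x : plane) : snd x = s_zero k -> s_abs k (fst x) = 1 ->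
  1 <= vnorm (vsub x ((s_zero k, s_one k) : plane)).
Proof.
  destruct x as [a b]. simpl. intros -> Ha.
  pose proof (vnorm_lin_ge_fst (s_sub k a (s_zero k)) (s_sub k (s_zero k) (s_one k))) as H.
  replace (s_abs k (s_sub k a (s_zero k))) with 1 in H by (rewrite s_subr0; symmetry; exact Ha).
  exact H.
Qed.

Lemma plane_not_uniform_sBPBp : strictly_convex_span e1 e2 -> ~ uniform_sBPBp plane Y.
Proof.
  intros Hsc [eta Heta]. destruct (Heta 1 Rlt_0_1) as [Heta1 Hsbpb].
  set (lam := Rmin (eta 1 / 2) (1/2)).
  assert (Hlam : 0 < lam <= 1/2)
    by (unfold lam; split; [apply Rmin_glb_lt; lra | apply Rmin_r]).
  assert (Hlam_eta : lam < eta 1) by (unfold lam; pose proof (Rmin_l (eta 1 / 2) (1/2)); lra).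
  destruct (Hsbpb (shrink_op lam) ((s_zero k, s_one k) : plane)) as [x1 [Hx1 [HT Hdist]]].
  - split; [apply shrink_op_linear|]. exists 1. intro x. rewrite Rmult_1_l.
    apply shrink_op_contract. lra.
  - apply shrink_op_norm_one. lra.
  - unfold in_sphere. rewrite plane_vnorm. simpl. rewrite vnorm_lin_0b. apply s_abs1.
  - unfold shrink_op. simpl. rewrite s_mulr1, vnorm_lin_0b, s_abs_of_R, Rabs_right by lra. lra.
  - destruct (shrink_op_attains lam x1 Hsc Hlam Hx1 HT) as [Hb Ha].
    pose proof (plane_far_from_e2 x1 Hb Ha). lra.
Qed.
End Plane.

Theorem mainTheorem15 (k : scalar_kind) (Y : BanachSpace k) :
  has_strictly_convex_2dim_subspace Y ->
  exists X : BanachSpace k, uniformly_convex X /\ ~ uniform_sBPBp X Y.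
Proof.
  intros [u [v [Hind Hsc]]].
  destruct (orthonormal_pair_in_span k Y u v Hind)
    as [e1 [e2 [He1 [He2 [Horth [Hu Hv]]]]]].
  assert (Hsc' : strictly_convex_span e1 e2)
    by exact (strictly_convex_span_sub k Y u v e1 e2 Hu Hv Hsc).
  pose proof (plane_compact k Y e1 e2 He1 He2 Horth) as Hcompact.
  exists (Build_BanachSpace k (plane k Y e1 e2 He1 He2 Horth) (complete_of_compact k _ Hcompact)).
  split.
  - apply (uniformly_convex_of_strictly_convex k _ Hcompact).
    exact (plane_strictly_convex k Y e1 e2 He1 He2 Horth Hsc').
  - exact (plane_not_uniform_sBPBp k Y e1 e2 He1 He2 Horth Hsc').
Qed.
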